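(* For every $r\ge1$, $C_{1,r}(a)=G_{1,r+1}(a)$, that is, \[ (-1)^r\sum_{(n_1,\dots,n_r)\in S_r}\frac{B_{n_1}(a)}{n_1!}\cdots\frac{B_{n_r}(a)}{n_r!}=(-1)^r\lambda_{r+1}(a), \] where $S_r=\{(n_1,\dots,n_r)\in\mathbb Z_{\ge0}^r: n_1+\dots+n_r=r,\ n_{j+1}+\dots+n_r\le r-j\ (1\le j<r)\}$.
   Context: Bernoulli polynomials $B_n(a)$: $\sum_{n\ge0}B_n(a)x^n/n!=xe^{ax}/(e^x-1)$. $C_{1,r}(a)$ denotes the left-hand side of the displayed identity. Let $L(a,t)=\sum_{n\ge1}\lambda_n(a)t^n\in\mathbb Q[a][[t]]$ be the compositional inverse (in $t$) of $e^{-at}(e^t-1)$, equivalently the unique such series with $e^{L(a,t)}(1-te^{(a-1)L(a,t)})=1$. The generalized Gregory polynomials $G_{m,n}(a)$ are defined by $\sum_{m,n\ge0}G_{m,n}(a)x^my^n=\dfrac{yL(a,-x)^2-xL(a,-y)^2}{-L(a,-x)+L(a,-y)}$. *)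

(* All objects live in Q[a] = {poly rat}, the variable a being 'X. *)
From mathcomp Require Import all_boot all_algebra.
Set Implicit Arguments. Unset Strict Implicit. Unset Printing Implicit Defensive.
Import GRing.Theory Num.Theory.
Local Open Scope ring_scope.

(* B : nat -> {poly rat} is the sequence of Bernoulli polynomials B_n(a), i.e.
   sum_n B_n(a) x^n/n! = x e^{ax}/(e^x-1).  Written coefficientwise after
   multiplying by (e^x-1)/x = sum_{i>=0} x^i/(i+1)! :
     sum_{k=0}^n (B_k(a)/k!) * 1/(n-k+1)! = a^n/n!   for all n.
   This determines B uniquely (triangular system with unit diagonal). *)
Definition is_bernoulli_poly (B : nat -> {poly rat}) : Prop :=
  forall n : nat,
    \sum_(k < n.+1) ((k`!%:R)^-1 * ((n - k).+1`!%:R)^-1 : rat) *: B k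
    = ((n`!%:R)^-1 : rat) *: 'X^n.

(* coefficient of t^m in e^{-at}(e^t - 1) = (sum_j (-a)^j t^j/j!)(sum_{i>=1} t^i/i!) *)
Definition fcoef (m : nat) : {poly rat} :=
  \sum_(j < m) (((-1) ^+ j / ((j`!)%:R * ((m - j)`!)%:R)) : rat) *: 'X^j.

(* truncation sum_{1<=n<=N} lam_n t^n of L(a,t), as a polynomial in t over Q[a] *)
Definition Ltrunc (lam : nat -> {poly rat}) (N : nat) : {poly {poly rat}} :=
  \sum_(1 <= n < N.+1) (lam n)%:P * 'X^n.

(* L(a,t) = sum_{n>=1} lam_n t^n is the compositional inverse (in t) of
   f(t) = e^{-at}(e^t-1) = sum_{m>=1} fcoef m t^m, i.e. f(L(a,t)) = t in Q[a][[t]]: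
   the coefficient of t^N in sum_{m>=1} fcoef m * L^m is [N = 1] for every N
   (only m <= N and lam_n with n <= N contribute to that coefficient). *)
Definition is_comp_inv (lam : nat -> {poly rat}) : Prop :=
  forall N : nat,
    (\sum_(1 <= m < N.+1) (fcoef m)%:P * (Ltrunc lam N) ^+ m)`_N = (N == 1%N)%:R.

(* membership in S_r, for n = (n_1,...,n_r) stored 0-based as n : 'I_r -> nat
   (values bounded by r, automatic since the entries sum to r):
   n_1+...+n_r = r and n_{j+1}+...+n_r <= r - j for 1 <= j < r. *)
Definition inS (r : nat) (n : {ffun 'I_r -> 'I_r.+1}) : bool :=
  ((\sum_(i < r) (n i : nat))%N == r) &&
  [forall j : 'I_r, (1 <= j)%N ==> ((\sum_(i < r | (j <= i)%N) (n i : nat))%N <= r - j)%N].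

From mathcomp Require Import all_boot all_algebra.
From mathcomp Require Import ring zify.
Set Implicit Arguments. Unset Strict Implicit. Unset Printing Implicit Defensive.
Import GRing.Theory Num.Theory.
Local Open Scope ring_scope.

(** Put β_n = B_n(a)/n! and φ(t) = Σ β_n t^n = t e^{at}/(e^t - 1), so that
    f(t) φ(t) = t for f(t) = e^{-at}(e^t - 1).  Substituting the inverse
    series L of f gives the Lagrange equation L = t φ(L), hence
    [t^{N+1}] L^{k+1} = Σ_x β_x [t^N] L^{k+x}.  Unfolding this recursion from
    λ_{r+1} = [t^{r+1}] L^1 writes λ_{r+1} as the sum of β_{n_1}⋯β_{n_r} over the
    Łukasiewicz walks 1 = h_0, h_{j+1} = h_j - 1 + n_{j+1} that stay positive
    and end at h_r = 1; these are exactly the sequences of S_r. *)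

Section EqModXn.
Variable R : comNzRingType.
Implicit Types p q s L : {poly R}.

Definition eqmodXn K p q := exists s, p - q = 'X^K * s.

Lemma eqmodXnP K p q : eqmodXn K p q <-> forall i, (i < K)%N -> p`_i = q`_i.
Proof.
split=> [[s hs] i hi | h].
  by apply/eqP; rewrite -subr_eq0 -coefB hs coefXnM hi.
exists (drop_poly K (p - q)).
have ht : take_poly K (p - q) = 0.
  apply/polyP=> i; rewrite coef_take_poly coef0 coefB.
  by case: ifP => // /h ->; rewrite subrr.
by rewrite -{1}(poly_take_drop K (p - q)) ht add0r mulrC.
Qed.

Lemma eqmodXn_refl K p : eqmodXn K p p.
Proof. by exists 0; rewrite subrr mulr0. Qed.

Lemma eqmodXn_sym K p q : eqmodXn K p q -> eqmodXn K q p.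
Proof. by move=> [s hs]; exists (- s); rewrite mulrN -hs opprB. Qed.

Lemma eqmodXn_trans K p q s : eqmodXn K p q -> eqmodXn K q s -> eqmodXn K p s.
Proof. by move=> [a ha] [b hb]; exists (a + b); rewrite mulrDr -ha -hb addrA subrK. Qed.

Lemma eqmodXnMr K p q s : eqmodXn K p q -> eqmodXn K (p * s) (q * s).
Proof. by move=> [a ha]; exists (a * s); rewrite -mulrBl ha mulrA. Qed.

Lemma eqmodXnMl K p q s : eqmodXn K p q -> eqmodXn K (s * p) (s * q).
Proof. by rewrite ![s * _]mulrC; apply: eqmodXnMr. Qed.

Lemma eqmodXnM K p q p' q' :
  eqmodXn K p q -> eqmodXn K p' q' -> eqmodXn K (p * p') (q * q').
Proof. by move=> h1 h2; apply: eqmodXn_trans (eqmodXnMr _ h1) (eqmodXnMl _ h2). Qed.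

Lemma eqmodXnX K p q n : eqmodXn K p q -> eqmodXn K (p ^+ n) (q ^+ n).
Proof.
move=> h; elim: n => [|n IH]; first by rewrite !expr0; apply: eqmodXn_refl.
by rewrite !exprS; apply: eqmodXnM.
Qed.

Lemma eqmodXn_comp_polyr K p L L' :
  eqmodXn K L L' -> eqmodXn K (p \Po L) (p \Po L').
Proof.
move=> h; apply/eqmodXnP => i hi; rewrite !coef_comp_poly.
by apply: eq_bigr => j _; have /eqmodXnP -> := eqmodXnX j h.
Qed.

Lemma mulX_drop_poly1 p : p`_0 = 0 -> 'X * drop_poly 1 p = p.
Proof.
move=> h0; rewrite -[RHS](poly_take_drop 1 p) mulrC.
suff -> : take_poly 1 p = 0 by rewrite add0r.
by apply/polyP=> -[|i]; rewrite coef_take_poly coef0.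
Qed.

Lemma eqmodXn_comp_polyl K p q L :
  L`_0 = 0 -> eqmodXn K p q -> eqmodXn K (p \Po L) (q \Po L).
Proof.
move=> h0 [s hs]; exists ((drop_poly 1 L) ^+ K * (s \Po L)).
rewrite -comp_polyB hs comp_polyM rmorphXn /= comp_polyX -{1}(mulX_drop_poly1 h0).
by rewrite exprMn mulrA.
Qed.

Lemma coef_expr_lt L k N : L`_0 = 0 -> (N < k)%N -> (L ^+ k)`_N = 0.
Proof. by move=> h0 hN; rewrite -(mulX_drop_poly1 h0) exprMn coefXnM hN. Qed.

Lemma comp_poly_poly (c : nat -> R) K L :
  (\poly_(i < K) c i) \Po L = \sum_(i < K) (c i)%:P * L ^+ i.
Proof.
rewrite poly_def rmorph_sum /=; apply: eq_bigr => i _.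
by rewrite -mul_polyC comp_polyM comp_polyC rmorphXn /= comp_polyX.
Qed.

End EqModXn.

Fixpoint luk (k : nat) (s : seq nat) : bool :=
  if s is x :: s' then (0 < k)%N && luk (k.-1 + x)%N s' else k == 1%N.

Definition prefix_sum (s : seq nat) (j : nat) : nat :=
  (\sum_(i < size s | i < j) nth 0 s i)%N.

Lemma prefix_sum0 s : prefix_sum s 0 = 0%N.
Proof. by rewrite /prefix_sum big_pred0. Qed.

Lemma prefix_sum_cons x s j : prefix_sum (x :: s) j.+1 = (x + prefix_sum s j)%N.
Proof. by rewrite /prefix_sum /= big_mkcond big_ord_recl [in RHS]big_mkcond. Qed.

Lemma lukE k s :
  luk k s = (k + sumn s == (size s).+1)%N &&
            all (fun j => j < k + prefix_sum s j)%N (iota 0 (size s).+1).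
Proof.
elim: s k => [|x s IH] [|k] /=; rewrite ?prefix_sum0 ?addn0 ?andbT //.
  by rewrite ltnn andFb andbF.
rewrite IH addSn eqSS addnA; congr (_ && _).
rewrite (iotaDl 1 1) all_map prefix_sum_cons !prefix_sum0 !addn0 addSn ltnS.
under [in RHS]eq_all => j do rewrite /= add1n prefix_sum_cons addSn ltnS addnA.
by rewrite /= prefix_sum0 addn0.
Qed.

Definition ffun_seq N M (f : {ffun 'I_N -> 'I_M}) : seq nat :=
  [seq val (f i) | i <- enum 'I_N].

Definition ffun_cons N M (p : 'I_M * {ffun 'I_N -> 'I_M}) : {ffun 'I_N.+1 -> 'I_M} :=
  [ffun i => if unlift ord0 i is Some j then p.2 j else p.1].

Lemma ffun_cons_bij N M : bijective (@ffun_cons N M).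
Proof.
exists (fun f : {ffun 'I_N.+1 -> 'I_M} => (f ord0, [ffun j : 'I_N => f (lift ord0 j)])).
  move=> [x g]; rewrite /ffun_cons /= ffunE unlift_none; congr (_, _).
  by apply/ffunP => j; rewrite !ffunE liftK.
move=> f; apply/ffunP => i; rewrite /ffun_cons ffunE.
by case: (unliftP ord0 i) => [j ->|->] /=; rewrite ?ffunE.
Qed.

Lemma ffun_seq_cons N M x g : ffun_seq (@ffun_cons N M (x, g)) = val x :: ffun_seq g.
Proof.
rewrite /ffun_seq enum_ordSl /= ffunE unlift_none /=; congr (_ :: _).
by rewrite -map_comp; apply: eq_map => j /=; rewrite ffunE liftK.
Qed.

Section LukasiewiczSum.
Variables (R : comNzRingType) (c : nat -> R) (M : nat).

Fixpoint luk_sum N k : R :=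
  if N is N'.+1 then
    if k is k'.+1 then \sum_(x < M) c x * luk_sum N' (k' + x)%N else 0
  else (k == 1%N)%:R.

Lemma sum_luk_prod N k :
  \sum_(f : {ffun 'I_N -> 'I_M} | luk k (ffun_seq f)) \prod_(i < N) c (f i)
  = luk_sum N k.
Proof.
elim: N k => [|N IH] k.
  rewrite /ffun_seq enum_ord0 /=; case: (k == 1%N); last by rewrite big_pred0.
  rewrite (eq_bigr (fun _ => 1)) => [|f _]; last exact: big_ord0.
  by rewrite sumr_const card_ffun !card_ord expn0.
rewrite big_mkcond (reindex (@ffun_cons N M)) /=; last exact/onW_bij/ffun_cons_bij.
have sum_pair (G : 'I_M * {ffun 'I_N -> 'I_M} -> R) :
    \sum_p G p = \sum_x \sum_g G (x, g).
  by rewrite pair_bigA; apply: eq_bigr => -[].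
rewrite sum_pair.
case: k => [|k] /=.
  by rewrite big1 // => x _; rewrite big1 // => g _; rewrite ffun_seq_cons.
apply: eq_bigr => x _; rewrite -IH [in RHS]big_mkcond mulr_sumr; apply: eq_bigr => g _.
rewrite ffun_seq_cons /= big_ord_recl ffunE unlift_none.
case: ifP => _; last by rewrite mulr0.
by congr (_ * _); apply: eq_bigr => i _; rewrite ffunE liftK.
Qed.

End LukasiewiczSum.

Lemma inS_luk r (n : {ffun 'I_r -> 'I_r.+1}) : inS n = luk 1 (ffun_seq n).
Proof.
have size_n : size (ffun_seq n) = r by rewrite size_map size_enum_ord.
have sum_n : sumn (ffun_seq n) = (\sum_(i < r) n i)%N.
  by rewrite sumnE big_map big_enum.
have prefix_n j : prefix_sum (ffun_seq n) j = (\sum_(i < r | i < j) n i)%N.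
  rewrite /prefix_sum size_n; apply: eq_bigr => i _.
  by rewrite (nth_map i) ?size_enum_ord // nth_ord_enum.
have split_n j : (\sum_(i < r | i < j) n i + \sum_(i < r | j <= i) n i)%N
                 = (\sum_(i < r) n i)%N.
  rewrite [in RHS](bigID (fun i : 'I_r => (i < j)%N)) /=.
  by congr addn; apply: eq_bigl => i; rewrite -leqNgt.
rewrite lukE size_n sum_n /inS add1n eqSS; case: eqP => //= sum_r.
apply/forallP/allP => [H j | H j].
- rewrite mem_iota prefix_n => /andP[j_gt0 le_jr].
  have [lt_jr|ge_jr] := ltnP j r.
    have /implyP/(_ j_gt0) /= := H (Ordinal lt_jr); have := split_n j.
    rewrite sum_r.
    by move: (\sum_(i < r | i < j) n i)%N (\sum_(i < r | j <= i) n i)%N => P Q; lia.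
  have suffix0 : (\sum_(i < r | j <= i) n i)%N = 0%N.
    by rewrite big_pred0 // => i; rewrite leqNgt (leq_trans (ltn_ord i) ge_jr).
  by have := split_n j; rewrite sum_r suffix0 addn0 => ->.
- apply/implyP => j_gt0.
  have := H j; rewrite prefix_n mem_iota j_gt0 => /(_ (ltnW (ltn_ord j))).
  have := split_n j; rewrite sum_r.
  by move: (\sum_(i < r | i < j) n i)%N (\sum_(i < r | j <= i) n i)%N => P Q; lia.
Qed.

Section Series.
Variable B : nat -> {poly rat}.
Hypothesis HB : is_bernoulli_poly B.

Definition bern_coef n : {poly rat} := ((n`!%:R)^-1 : rat) *: B n.

Definition bern_series K : {poly {poly rat}} := \poly_(i < K) bern_coef i.
Definition f_series K : {poly {poly rat}} := \poly_(i < K) fcoef i.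
Definition exp_neg_at_series K : {poly {poly rat}} :=
  \poly_(j < K) ((((-1) ^+ j / j`!%:R) : rat) *: 'X^j).
Definition expm1_series K : {poly {poly rat}} :=
  \poly_(i < K) (if i == 0%N then 0 else ((i`!%:R)^-1 : rat)%:P).
Definition exp_at_series K : {poly {poly rat}} :=
  \poly_(n < K) (((n`!%:R)^-1 : rat) *: 'X^n).

Lemma bern_coef0 : bern_coef 0 = 1.
Proof. by have := HB 0; rewrite big_ord1 /bern_coef invr1 mulr1 !scale1r expr0. Qed.

Lemma fcoef0 : fcoef 0 = 0.
Proof. exact: big_ord0. Qed.

Lemma coef0_expm1_series K : (expm1_series K)`_0 = 0.
Proof. by rewrite coef_poly; case: ifP. Qed.

Lemma f_series_factor K :
  eqmodXn K (f_series K) (exp_neg_at_series K * expm1_series K).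
Proof.
apply/eqmodXnP => m hm; rewrite coef_poly hm coefM big_ord_recr /= subnn.
rewrite coef0_expm1_series mulr0 addr0 /fcoef; apply: eq_bigr => j _.
rewrite !coef_poly (ltn_trans (ltn_ord j) hm) (leq_ltn_trans (leq_subr j m) hm).
rewrite subn_eq0 leqNgt (ltn_ord j) /= [_ * _%:P]mulrC mul_polyC scalerA.
by congr (_ *: _); rewrite invfM; ring.
Qed.

Lemma expm1_bern_series K :
  eqmodXn K (expm1_series K * bern_series K) ('X * exp_at_series K).
Proof.
apply/eqmodXnP => -[|m] hm.
  by rewrite coefM big_ord1 coefXM /= coef_poly; case: ifP => _; rewrite /= mul0r.
rewrite coefMr big_ord_recr /= subnn coef0_expm1_series mul0r addr0.
rewrite coefXM /= coef_poly (ltn_trans (ltnSn m) hm) -HB.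
apply: eq_bigr => k _.
have hk : (k < K)%N by apply: leq_ltn_trans (leq_trans (leq_ord k) (leqnSn m)) hm.
rewrite !coef_poly hk (leq_ltn_trans (leq_subr k m.+1) hm) subn_eq0 leqNgt.
by rewrite ltnS (leq_ord k) /= mul_polyC scalerA subSn ?(leq_ord k) // mulrC.
Qed.

Lemma alt_sum_inv_facts n :
  \sum_(j < n.+1) (((-1) ^+ j / (j`!%:R * (n - j)`!%:R)) : rat) = (n == 0%N)%:R.
Proof.
have -> : \sum_(j < n.+1) (((-1) ^+ j / (j`!%:R * (n - j)`!%:R)) : rat)
    = (n`!%:R)^-1 * (1 - 1) ^+ n.
  rewrite exprBn big_distrr /=; apply: eq_bigr => j _.
  rewrite !expr1n !mulr1 -mulr_natr.
  have hf : (n`!%:R : rat) = 'C(n, j)%:R * (j`!%:R * (n - j)`!%:R).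
    by rewrite -!natrM bin_fact // -ltnS.
  have hne : (j`!%:R * (n - j)`!%:R : rat) != 0.
    by rewrite mulf_neq0 // pnatr_eq0 -lt0n fact_gt0.
  have hc : ('C(n, j)%:R : rat) != 0 by rewrite pnatr_eq0 -lt0n bin_gt0 -ltnS.
  by rewrite hf invfM; field; rewrite hc andbT !pnatr_eq0 -!lt0n !fact_gt0.
by rewrite subrr; case: n => [|n]; rewrite ?expr0 ?mulr1 ?invr1 // expr0n mulr0.
Qed.

Lemma exp_neg_at_exp_at_series K :
  eqmodXn K (exp_neg_at_series K * exp_at_series K) 1.
Proof.
apply/eqmodXnP => n hn; rewrite coefM coef1.
transitivity ((\sum_(j < n.+1) (((-1) ^+ j / (j`!%:R * (n - j)`!%:R)) : rat))
              *: ('X^n : {poly rat})).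
  rewrite scaler_suml; apply: eq_bigr => j _.
  have hj : (j < K)%N by apply: leq_ltn_trans (leq_ord j) hn.
  rewrite !coef_poly hj (leq_ltn_trans (leq_subr j n) hn).
  rewrite -scalerAl -scalerAr scalerA -exprD subnKC ?(leq_ord j) //.
  by congr (_ *: _); rewrite invfM; ring.
by rewrite alt_sum_inv_facts; case: n {hn} => [|n] /=; rewrite ?scale1r ?scale0r.
Qed.

Lemma f_bern_series K : eqmodXn K (f_series K * bern_series K) 'X.
Proof.
apply: eqmodXn_trans (eqmodXnMr _ (f_series_factor K)) _.
rewrite -mulrA; apply: eqmodXn_trans (eqmodXnMl _ (expm1_bern_series K)) _.
rewrite mulrCA -[X in eqmodXn _ _ X]mulr1.
exact/eqmodXnMl/exp_neg_at_exp_at_series.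
Qed.

End Series.

Section CompInverse.
Variables B lam : nat -> {poly rat}.
Hypotheses (HB : is_bernoulli_poly B) (Hlam : is_comp_inv lam).

Lemma coef_Ltrunc M i : (Ltrunc lam M)`_i = if (0 < i <= M)%N then lam i else 0.
Proof.
elim: M => [|M IH]; first by rewrite /Ltrunc big_geq // coef0; case: i.
rewrite /Ltrunc big_nat_recr //= coefD -/(Ltrunc lam M) IH coefCM coefXn.
have [->|ne] := eqVneq i M.+1; first by rewrite ltnn andbF mulr1 add0r leqnn.
by rewrite mulr0 addr0 (leq_eqVlt i M.+1) (negbTE ne) ltnS.
Qed.

Lemma coef0_Ltrunc M : (Ltrunc lam M)`_0 = 0.
Proof. by rewrite coef_Ltrunc. Qed.

Lemma f_series_comp_Ltrunc M : eqmodXn M.+1 (f_series M.+1 \Po Ltrunc lam M) 'X.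
Proof.
apply/eqmodXnP => N; rewrite ltnS => le_NM.
(* [is_comp_inv] only constrains the truncations at order N. *)
have f_eq : eqmodXn N.+1 (f_series M.+1) (f_series N.+1).
  by apply/eqmodXnP => i lt_iN; rewrite !coef_poly lt_iN (leq_trans lt_iN).
have L_eq : eqmodXn N.+1 (Ltrunc lam M) (Ltrunc lam N).
  by apply/eqmodXnP => i; rewrite ltnS !coef_Ltrunc => le_iN; rewrite le_iN (leq_trans le_iN).
have /eqmodXnP -> // := eqmodXn_comp_polyl (coef0_Ltrunc M) f_eq.
have /eqmodXnP -> // := eqmodXn_comp_polyr (f_series N.+1) L_eq.
rewrite comp_poly_poly big_ord_recl fcoef0 mul0r add0r coefX -Hlam.
by rewrite big_add1 big_mkord.
Qed.

(* Compose f φ = t with L and use f(L) = t. *)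
Lemma Ltrunc_lagrange M :
  eqmodXn M.+1 (Ltrunc lam M) ('X * (bern_series B M.+1 \Po Ltrunc lam M)).
Proof.
have := eqmodXn_comp_polyl (coef0_Ltrunc M) (f_bern_series HB M.+1).
rewrite comp_polyX comp_polyM => /eqmodXn_sym/eqmodXn_trans; apply.
exact/eqmodXnMr/f_series_comp_Ltrunc.
Qed.

Lemma coef_Ltrunc_exprS M k N : (N < M)%N ->
  ((Ltrunc lam M) ^+ k.+1)`_N.+1 =
  \sum_(x < M.+1) bern_coef B x * ((Ltrunc lam M) ^+ (k + x)%N)`_N.
Proof.
move=> lt_NM; rewrite exprSr.
have /eqmodXnP -> // := eqmodXnMl (Ltrunc lam M ^+ k) (Ltrunc_lagrange M).
rewrite mulrCA coefXM /= comp_poly_poly mulr_sumr coef_sum.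
by apply: eq_bigr => x _; rewrite mulrCA coefCM exprD.
Qed.

Lemma coef_Ltrunc_expr r N k : (N <= r)%N ->
  ((Ltrunc lam r.+1) ^+ k)`_N.+1 = luk_sum (bern_coef B) r.+1 N k.
Proof.
have coef_small j M := @coef_expr_lt _ _ j M (coef0_Ltrunc r.+1).
elim: N k => [|N IH] [|k] le_Nr /=; rewrite ?expr0 ?coef1 //.
  rewrite coef_Ltrunc_exprS // big_ord_recl big1 ?addr0 => [|x _].
    by case: k => [|k]; rewrite ?addn0 ?expr0 ?coef1 ?bern_coef0 ?mulr1 ?coef_small ?mulr0.
  by rewrite coef_small ?mulr0 // addnS.
rewrite coef_Ltrunc_exprS // big_ord_recr /= coef_small ?mulr0 ?addr0; last first.
  by rewrite addnS ltnS (leq_trans le_Nr) ?leq_addl.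
by apply: eq_bigr => x _; rewrite IH // ltnW.
Qed.

End CompInverse.

Theorem theorem6p7 (r : nat) (B lam : nat -> {poly rat}) :
  (1 <= r)%N -> is_bernoulli_poly B -> is_comp_inv lam ->
  (-1) ^+ r * \sum_(n : {ffun 'I_r -> 'I_r.+1} | inS n)
                 \prod_(i < r) ((((n i)`!%:R)^-1 : rat) *: B (n i))
  = (-1) ^+ r * lam r.+1.
Proof.
move=> _ HB Hlam; congr (_ * _).
rewrite (eq_bigl _ _ (@inS_luk r)) (sum_luk_prod (bern_coef B)).
rewrite -(coef_Ltrunc_expr HB Hlam 1 (leqnn r)) expr1 coef_Ltrunc.
by rewrite ltn0Sn leqnn.
Qed.
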